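(* Let $G$ be a finitely presented group. Then $rdef(G)-1\le DG(G)$. In particular, if $rdef(G)>1$, then $G$ has a finite index subgroup with deficiency greater than one.
   Context: Let $Q=\langle X\mid R\rangle$ be a finite presentation of $G$, $X$ freely generating the free group $F_n$, $\varphi:F_n\to G$ the canonical map. Write $R=\{u_1^{m_1},\ldots,u_s^{m_s}\}$ with each $u_i\in F_n$ not a proper power in $F_n$. Let $R_G$ (the finite residual) be the intersection of all finite index subgroups of $G$, and $k_i$ the order of $\varphi(u_i)R_G$ in $G/R_G$. Then $rdef(Q)=n-\sum_{i=1}^s 1/k_i$, and the residual deficiency $rdef(G)$ is the supremum of $rdef(Q)$ over all finite presentations $Q$ of $G$. The deficiency of a finite presentation is (number of generators) $-$ (number of relators), $def(K)$ is the supremum over finite presentations of $K$, and $DG(G)=\sup_{H\leqslant_f G}\frac{def(H)-1}{|G:H|}$ over finite index subgroups $H$. *)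

From HB Require Import structures.
From mathcomp Require Import all_boot all_order all_algebra.
From mathcomp Require Import classical_sets boolp reals ereal.
Set Implicit Arguments. Unset Strict Implicit. Unset Printing Implicit Defensive.
Import Order.TTheory GRing.Theory Num.Theory.
Local Open Scope ring_scope.
Local Open Scope classical_set_scope.

Record group := Group {
  gT :> Type;
  gmul : gT -> gT -> gT;
  ginv : gT -> gT;
  gone : gT;
  gmulA : forall x y z, gmul x (gmul y z) = gmul (gmul x y) z;
  gmul1g : forall x, gmul gone x = x;
  gmulg1 : forall x, gmul x gone = x;
  gmulVg : forall x, gmul (ginv x) x = gone;
  gmulgV : forall x, gmul x (ginv x) = gone }.

Fixpoint gexp (G : group) (g : G) (k : nat) : G :=
  if k is k'.+1 then gmul g (gexp g k') else gone G.

Record subgroup (G : group) := Subgroup {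
  sg_mem :> G -> Prop;
  sg_one : sg_mem (gone G);
  sg_mul : forall x y, sg_mem x -> sg_mem y -> sg_mem (gmul x y);
  sg_inv : forall x, sg_mem x -> sg_mem (ginv x) }.

(* H has finite index j in G: j left cosets g_i H partition G *)
Definition index_is (G : group) (H : subgroup G) (j : nat) : Prop :=
  exists reps : 'I_j -> G,
    forall x : G, exists! i : 'I_j, H (gmul (ginv (reps i)) x).

Definition finite_index (G : group) (H : subgroup G) : Prop :=
  exists j, index_is H j.

Section SubGroupAsGroup.
Variables (G : group) (H : subgroup G).
Definition sub_carrier := {x : G | H x}.
Definition sub_mul (x y : sub_carrier) : sub_carrier :=
  exist _ (gmul (proj1_sig x) (proj1_sig y)) (sg_mul (proj2_sig x) (proj2_sig y)).
Definition sub_inv (x : sub_carrier) : sub_carrier :=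
  exist _ (ginv (proj1_sig x)) (sg_inv (proj2_sig x)).
Definition sub_one : sub_carrier := exist _ (gone G) (sg_one H).
Lemma sub_eq (x y : sub_carrier) : proj1_sig x = proj1_sig y -> x = y.
Proof.
case: x y => [x hx] [y hy] /= exy; subst y.
by rewrite (Prop_irrelevance hx hy).
Qed.
Lemma sub_mulA x y z : sub_mul x (sub_mul y z) = sub_mul (sub_mul x y) z.
Proof. by apply: sub_eq; rewrite /= gmulA. Qed.
Lemma sub_mul1 x : sub_mul sub_one x = x.
Proof. by apply: sub_eq; rewrite /= gmul1g. Qed.
Lemma sub_mulg1 x : sub_mul x sub_one = x.
Proof. by apply: sub_eq; rewrite /= gmulg1. Qed.
Lemma sub_mulV x : sub_mul (sub_inv x) x = sub_one.
Proof. by apply: sub_eq; rewrite /= gmulVg. Qed.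
Lemma sub_mulgV x : sub_mul x (sub_inv x) = sub_one.
Proof. by apply: sub_eq; rewrite /= gmulgV. Qed.
Definition sub_group : group :=
  Group sub_mulA sub_mul1 sub_mulg1 sub_mulV sub_mulgV.
End SubGroupAsGroup.

Definition fin_residual (G : group) (x : G) : Prop :=
  forall H : subgroup G, finite_index H -> H x.

(* a letter (i, b): generator x_i if b = false, x_i^{-1} if b = true *)
Definition word (n : nat) := seq ('I_n * bool).
Definition flip n (a : 'I_n * bool) : 'I_n * bool := (a.1, ~~ a.2).
Definition wpow n (u : word n) (m : nat) : word n := flatten (nseq m u).

(* equality in <X | R>: the congruence on words generated by free
   cancellation and the relators; with R = [::] this is equality in F_n *)
Inductive pres_eq (n : nat) (R : seq (word n)) : word n -> word n -> Prop :=
| pe_refl w : pres_eq R w w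
| pe_sym u v : pres_eq R u v -> pres_eq R v u
| pe_trans u v w : pres_eq R u v -> pres_eq R v w -> pres_eq R u w
| pe_cat u u' v v' : pres_eq R u u' -> pres_eq R v v' -> pres_eq R (u ++ v) (u' ++ v')
| pe_cancel a : pres_eq R [:: a; flip a] [::]
| pe_rel r : r \in R -> pres_eq R r [::].

Definition free_eq n := @pres_eq n [::].

Definition not_proper_power n (u : word n) : Prop :=
  forall (v : word n) (k : nat), (2 <= k)%N -> ~ free_eq u (wpow v k).

Definition eval_letter (G : group) n (f : 'I_n -> G) (a : 'I_n * bool) : G :=
  if a.2 then ginv (f a.1) else f a.1.
Definition eval_word (G : group) n (f : 'I_n -> G) (w : word n) : G :=
  foldr (fun a g => gmul (eval_letter f a) g) (gone G) w.

(* Q = <x_1..x_n | R> is a finite presentation of G via x_i |-> f i :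
   phi is onto and its kernel is the normal closure of R *)
Definition presentation (G : group) n (R : seq (word n)) (f : 'I_n -> G) : Prop :=
  (forall g : G, exists w, eval_word f w = g) /\
  (forall w, eval_word f w = gone G <-> pres_eq R w [::]).

Definition finitely_presented (G : group) : Prop :=
  exists n (R : seq (word n)) (f : 'I_n -> G), presentation R f.

Section Deficiencies.
Variable Rl : realType.
Local Open Scope ereal_scope.

(* q = 1/k where k is the order of g R_G in G/R_G (q = 0 if infinite) *)
Definition recip_order (G : group) (g : G) (q : Rl) : Prop :=
  (exists k : nat, [/\ (1 <= k)%N, fin_residual (gexp g k),
     (forall k', (1 <= k')%N -> (k' < k)%N -> ~ fin_residual (gexp g k')) &
     q = (k%:R)^-1]%R)
  \/ ((forall k, (1 <= k)%N -> ~ fin_residual (gexp g k)) /\ q = 0%R).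

(* rdef(Q) = n - sum_i 1/k_i, with relators r_i = u_i^{m_i} in F_n *)
Definition rdef_pres (G : group) n (R : seq (word n)) (f : 'I_n -> G) (x : Rl) : Prop :=
  exists (u : 'I_(size R) -> word n) (q : 'I_(size R) -> Rl),
    (forall i : 'I_(size R), exists m : nat,
       [/\ (1 <= m)%N, free_eq (nth [::] R i) (wpow (u i) m),
           not_proper_power (u i) & recip_order (eval_word f (u i)) (q i)])
    /\ x = (n%:R - \sum_(i < size R) q i)%R.

Definition rdef (G : group) : \bar Rl :=
  ereal_sup [set x%:E | x in [set x : Rl |
    exists n (R : seq (word n)) (f : 'I_n -> G), presentation R f /\ rdef_pres R f x]].

Definition def (K : group) : \bar Rl :=
  ereal_sup [set x%:E | x in [set x : Rl |
    exists n (R : seq (word n)) (f : 'I_n -> K),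
      presentation R f /\ x = (n%:R - (size R)%:R)%R]].

Definition DG (G : group) : \bar Rl :=
  ereal_sup [set x | exists (H : subgroup G) (j : nat),
    index_is H j /\ x = (def (sub_group H) - 1) * ((j%:R)^-1)%:E].
End Deficiencies.

From Pilot Require Import Defs.
From HB Require Import structures.
From mathcomp Require Import all_boot all_order all_algebra all_fingroup.
From mathcomp Require Import classical_sets boolp reals ereal.
From mathcomp Require Import cyclic ring lra.
Import Pilot.Defs.
Import Order.TTheory GRing.Theory Num.Theory.
Set Implicit Arguments. Unset Strict Implicit. Unset Printing Implicit Defensive.

(* Fix a presentation with relators u_i^m_i and e > 0.  Choose a
   finite quotient rho : G -> F in which each rho (u_i) has order at least
   min(k_i, M), with M >> 1/e: the finitely many powers u_i^d, 0 < d < M, lying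
   outside the finite residual are each moved by the action of G on the cosets of
   some finite index subgroup, and the product of these actions separates them
   all.  The kernel N of rho has index |F|, and the Reidemeister-Schreier
   presentation of N has n|F| generators and |F| - 1 + sum_i |F| / o(rho u_i)
   relators, so (def N - 1) / |F| >= n - 1 - sum_i 1 / o(rho u_i) >= rdef Q - 1 - e. *)

Local Notation "x *g y" := (gmul x y) (at level 40, left associativity).

Section GroupFacts.
Variable G : group.
Implicit Types x y : G.

Lemma gmulKg x y : ginv x *g (x *g y) = y.
Proof. by rewrite gmulA gmulVg gmul1g. Qed.
Lemma gmulKVg x y : x *g (ginv x *g y) = y.
Proof. by rewrite gmulA gmulgV gmul1g. Qed.
Lemma gmulgK x y : y *g x *g ginv x = y.
Proof. by rewrite -gmulA gmulgV gmulg1. Qed.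

Lemma ginv_unique x y : x *g y = gone G -> y = ginv x.
Proof. by move=> xy1; rewrite -(gmulKg x y) xy1 gmulg1. Qed.
Lemma ginvK x : ginv (ginv x) = x.
Proof. by symmetry; apply: ginv_unique; rewrite gmulVg. Qed.
Lemma ginvM x y : ginv (x *g y) = ginv y *g ginv x.
Proof.
by symmetry; apply: ginv_unique; rewrite -gmulA (gmulA y) gmulgV gmul1g gmulgV.
Qed.
Lemma ginv1 : ginv (gone G) = gone G.
Proof. by symmetry; apply: ginv_unique; rewrite gmulg1. Qed.
End GroupFacts.

Definition gmorphism (G : group) (fT : finGroupType) (rho : G -> fT) :=
  forall x y, rho (x *g y) = (rho x * rho y)%g.

Section HomToFinite.
Variables (G : group) (fT : finGroupType) (rho : G -> fT).
Hypothesis rhoM : gmorphism rho.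
Local Open Scope group_scope.

Lemma gmorph1 : rho (gone G) = 1.
Proof. by apply: (mulgI (rho (gone G))); rewrite -rhoM gmul1g mulg1. Qed.
Lemma gmorphV x : rho (ginv x) = (rho x)^-1.
Proof. by apply: (mulgI (rho x)); rewrite -rhoM gmulgV gmorph1 mulgV. Qed.
Lemma gmorphX x k : rho (gexp x k) = rho x ^+ k.
Proof. by elim: k => [|k IHk] /=; rewrite ?gmorph1 // rhoM IHk expgS. Qed.

Lemma gker_mul x y : rho x = 1 -> rho y = 1 -> rho (x *g y) = 1.
Proof. by move=> x1 y1; rewrite rhoM x1 y1 mulg1. Qed.
Lemma gker_inv x : rho x = 1 -> rho (ginv x) = 1.
Proof. by move=> x1; rewrite gmorphV x1 invg1. Qed.
Definition gker : subgroup G := @Subgroup G (fun x => rho x = 1) gmorph1 gker_mul gker_inv.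

Lemma index_gker : (forall z, exists x, rho x = z) -> index_is gker #|fT|.
Proof.
move=> /choice [sec secK].
exists (fun k => sec (enum_val k)) => x; exists (enum_rank (rho x)); split.
  by rewrite /= rhoM gmorphV secK enum_rankK mulVg.
move=> k /=; rewrite rhoM gmorphV secK => /eqP; rewrite -eq_mulVg1 => /eqP <-.
by rewrite enum_valK.
Qed.

Definition gimage : {set fT} := [set z | `[< exists x, rho x = z >]].

Lemma mem_gimage x : rho x \in gimage.
Proof. by rewrite inE; apply/asboolP; exists x. Qed.

Lemma group_set_gimage : group_set gimage.
Proof.
apply/group_setP; split; first by rewrite -gmorph1 mem_gimage.
move=> z1 z2; rewrite !inE => -[x <-] [y <-].
by exists (x *g y); rewrite rhoM.
Qed.
Canonical gimage_group := fingroup.Group group_set_gimage.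

Definition corestr x : subg_of gimage_group := subg gimage_group (rho x).

Lemma corestrE x : val (corestr x) = rho x.
Proof. exact: subgK (mem_gimage x). Qed.

Lemma corestrM : gmorphism corestr.
Proof. by move=> x y; rewrite /corestr rhoM subgM ?mem_gimage. Qed.

Lemma corestr_onto z : exists x, corestr x = z.
Proof.
have := subgP z; rewrite inE => /asboolP [x xz].
by exists x; apply: val_inj; rewrite corestrE xz.
Qed.

End HomToFinite.

Lemma gmorph_fin_residual (G : group) (fT : finGroupType) (rho : G -> fT) y :
  gmorphism rho -> fin_residual y -> rho y = 1%g.
Proof.
move=> rhoM /(_ (gker (corestrM rhoM))) ker_y.
have /ker_y /= corestr_y1 : finite_index (gker (corestrM rhoM)).
  exact: ex_intro _ _ (index_gker _ (corestr_onto (rhoM := rhoM))).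
by rewrite -(corestrE rhoM) corestr_y1.
Qed.

Section ActionPerm.
Variables (G : group) (T : finType) (act : T -> G -> T).
Hypothesis act1 : forall t, act t (gone G) = t.
Hypothesis actM : forall t g h, act (act t g) h = act t (g *g h).

Lemma act_inj g : injective (act^~ g).
Proof. by move=> t1 t2 /(congr1 (act^~ (ginv g))); rewrite /= !actM gmulgV !act1. Qed.

Definition act_perm g : {perm T} := perm (@act_inj g).

Lemma act_permM : gmorphism act_perm.
Proof. by move=> g h; apply/permP => t; rewrite permM !permE actM. Qed.

Lemma act_perm_eq1 g t : act_perm g = 1%g -> act t g = t.
Proof. by move/(congr1 (fun p : {perm T} => p t)); rewrite permE perm1. Qed.
End ActionPerm.

Section CosetAction.
Variables (G : group) (H : subgroup G) (j : nat) (r : 'I_j -> G).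
Hypothesis r_transversal : forall x, exists! i, H (ginv (r i) *g x).

Lemma coset_exists x : exists i, H (ginv (r i) *g x).
Proof. by have [i [Hi _]] := r_transversal x; exists i. Qed.

Definition coset_idx x : 'I_j := projT1 (cid (coset_exists x)).

Lemma coset_idxP x : H (ginv (r (coset_idx x)) *g x).
Proof. exact: projT2 (cid (coset_exists x)). Qed.

Lemma coset_idx_unique x i : H (ginv (r i) *g x) -> i = coset_idx x.
Proof.
have [i0 [_ i0_uniq]] := r_transversal x.
by move=> Hi; rewrite -(i0_uniq _ Hi) -(i0_uniq _ (coset_idxP x)).
Qed.

Lemma coset_idx_eq x y : H (ginv x *g y) -> coset_idx x = coset_idx y.
Proof.
move=> Hxy; apply: coset_idx_unique.
by rewrite -(gmulKVg x y) gmulA; apply: sg_mul => //; apply: coset_idxP.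
Qed.

Definition coset_act (i : 'I_j) (g : G) := coset_idx (ginv g *g r i).

Lemma coset_act1 i : coset_act i (gone G) = i.
Proof.
rewrite /coset_act ginv1 gmul1g; symmetry; apply: coset_idx_unique.
by rewrite gmulVg; apply: sg_one.
Qed.

Lemma coset_actM i g h : coset_act (coset_act i g) h = coset_act i (g *g h).
Proof.
rewrite /coset_act; apply: coset_idx_eq.
have := coset_idxP (ginv g *g r i).
by rewrite !ginvM ginvK !gmulA gmulgK -!gmulA.
Qed.

Lemma coset_act_fixed x : coset_act (coset_idx (gone G)) x = coset_idx (gone G) -> H x.
Proof.
set i0 := coset_idx (gone G) => fix_x.
have H_r0 : H (ginv (r i0)) by have := coset_idxP (gone G); rewrite gmulg1.
have H_r0x : H (ginv (r i0) *g (ginv x *g r i0)).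
  by have := coset_idxP (ginv x *g r i0); rewrite -/(coset_act i0 x) fix_x.
have := sg_inv (sg_mul (sg_mul (sg_inv H_r0) H_r0x) H_r0).
by rewrite ginvK gmulKVg gmulgK ginvK.
Qed.
End CosetAction.

Lemma not_fin_residual_sep (G : group) (x : G) : ~ fin_residual x ->
  exists (fT : finGroupType) (rho : G -> fT), gmorphism rho /\ rho x <> 1%g.
Proof.
move=> /existsNP [H /not_implyP [[j [r rP]] Hx]].
exists {perm 'I_j}, (act_perm (coset_act1 rP) (coset_actM rP)); split.
  exact: act_permM.
by move=> /act_perm_eq1 fix_x; apply/Hx/coset_act_fixed/fix_x.
Qed.

Lemma fin_residual_sep (G : group) (I : eqType) (x : I -> G) (s : seq I) :
  (forall i, i \in s -> ~ fin_residual (x i)) ->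
  exists (fT : finGroupType) (rho : G -> fT),
    gmorphism rho /\ forall i, i \in s -> rho (x i) <> 1%g.
Proof.
elim: s => [|i s IHs] sep.
  by exists {perm unit}, (fun=> 1%g); split => // y z; rewrite mulg1.
have [fT1 [rho1 [rho1M rho1x]]] := not_fin_residual_sep (sep i (mem_head i s)).
have [fT2 [rho2 [rho2M rho2x]]] : exists (fT : finGroupType) (rho : G -> fT),
    gmorphism rho /\ forall k, k \in s -> rho (x k) <> 1%g.
  by apply: IHs => k ks; apply: sep; rewrite inE ks orbT.
exists (fT1 * fT2)%type, (fun y => (rho1 y, rho2 y)); split.
  by move=> y z; rewrite rho1M rho2M.
by move=> k /predU1P [-> | /rho2x ne1] [] // /rho1x.
Qed.

Section Words.
Variable n : nat.
Implicit Types (u v w : word n).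

Definition winv w : word n := rev (map (@flip n) w).

Lemma flipK : involutive (@flip n).
Proof. by case=> i b; rewrite /flip /= negbK. Qed.
Lemma winv_cons a w : winv (a :: w) = winv w ++ [:: flip a].
Proof. by rewrite /winv /= rev_cons cats1. Qed.
Lemma winvK : involutive winv.
Proof. by move=> w; rewrite /winv map_rev revK -map_comp (eq_map flipK) map_id. Qed.

Lemma wpowD u a b : wpow u (a + b) = wpow u a ++ wpow u b.
Proof. by rewrite /wpow nseqD flatten_cat. Qed.

Variable R : seq (word n).
Local Notation "u ~ v" := (pres_eq R u v) (at level 70).

Lemma pe_catl u v w : v ~ w -> u ++ v ~ u ++ w.
Proof. by move=> vw; apply: pe_cat => //; apply: pe_refl. Qed.
Lemma pe_catr u v w : v ~ w -> v ++ u ~ w ++ u.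
Proof. by move=> vw; apply: pe_cat => //; apply: pe_refl. Qed.

Lemma pe_winvr w : w ++ winv w ~ [::].
Proof.
elim: w => [|a w IHw] /=; first exact: pe_refl.
rewrite winv_cons catA; apply: pe_trans (pe_cancel R a).
rewrite -[[:: a; _]]/([:: a] ++ [:: flip a]) -cat_cons -[a :: w ++ winv w]cat1s.
by apply: pe_catr; rewrite -[X in _ ~ X]cats0; apply: pe_catl.
Qed.
Lemma pe_winvl w : winv w ++ w ~ [::].
Proof. by have := pe_winvr (winv w); rewrite winvK. Qed.

Lemma pe_catIl u v : u ++ v ~ u -> v ~ [::].
Proof.
move=> uv_u; apply: (@pe_trans _ _ _ ((winv u ++ u) ++ v)).
  by rewrite -[X in X ~ _]cat0s; apply/pe_catr/pe_sym/pe_winvl.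
by rewrite -catA; apply: pe_trans (pe_winvl u); apply: pe_catl.
Qed.

Lemma pe_winv u v : u ~ v -> winv u ~ winv v.
Proof.
move=> uv; apply: (@pe_trans _ _ _ (winv u ++ (v ++ winv v))).
  by rewrite -[X in X ~ _]cats0; apply/pe_catl/pe_sym/pe_winvr.
rewrite catA -[X in _ ~ X]cat0s; apply: pe_catr.
by apply: pe_trans (pe_winvl u); apply/pe_catl/pe_sym.
Qed.
End Words.

Lemma pres_eq_sub n (R1 R2 : seq (word n)) u v :
  (forall r, r \in R1 -> pres_eq R2 r [::]) -> pres_eq R1 u v -> pres_eq R2 u v.
Proof.
move=> R12; elim=> {u v} [w | u v _ | u v w _ uv _ | u u' v v' _ uu' _ | a | r /R12] //.
- exact: pe_refl.
- exact: pe_sym.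
- exact: pe_trans.
- exact: pe_cat.
- exact: pe_cancel.
Qed.

Lemma free_eq_pres n (R : seq (word n)) u v : free_eq u v -> pres_eq R u v.
Proof. by apply: pres_eq_sub => r; rewrite in_nil. Qed.

Section Evaluation.
Variables (G : group) (n : nat) (f : 'I_n -> G).
Local Notation ev := (eval_word f).

Lemma eval_cat u v : ev (u ++ v) = ev u *g ev v.
Proof. by elim: u => [|a u IHu] /=; rewrite ?gmul1g // IHu gmulA. Qed.
Lemma eval_flip a : eval_letter f (flip a) = ginv (eval_letter f a).
Proof. by case: a => i [] /=; rewrite /eval_letter /= ?ginvK. Qed.
Lemma eval_winv w : ev (winv w) = ginv (ev w).
Proof.
elim: w => [|a w IHw] /=; first by rewrite ginv1.
by rewrite winv_cons eval_cat IHw /= eval_flip gmulg1 ginvM.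
Qed.

Lemma eval_pres_eq (R : seq (word n)) u v :
  (forall r, r \in R -> ev r = gone G) -> pres_eq R u v -> ev u = ev v.
Proof.
move=> R1; elim=> {u v} [w | u v _ -> | u v w _ -> _ -> | u u' v v' _ uu' _ vv' | a
  | r /R1] //.
  by rewrite !eval_cat uu' vv'.
by rewrite /= eval_flip gmulg1 gmulgV.
Qed.
End Evaluation.

Lemma eval_sub_group (G : group) (H : subgroup G) m (g : 'I_m -> sub_group H) w :
  proj1_sig (eval_word g w) = eval_word (fun k => proj1_sig (g k)) w.
Proof. by elim: w => [|[k []] w IHw] //=; rewrite -IHw. Qed.

Lemma presentation_free_eq (G : group) n (R : seq (word n)) (f : 'I_n -> G)
    (u : 'I_(size R) -> word n) (m : 'I_(size R) -> nat) :
  presentation R f ->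
  (forall i : 'I_(size R), free_eq (nth [::] R i) (wpow (u i) (m i))) ->
  presentation [seq wpow (u i) (m i) | i <- enum 'I_(size R)] f.
Proof.
move=> [f_onto f_ker] Ru; split => // w; rewrite f_ker; split; apply: pres_eq_sub.
  move=> r; rewrite -index_mem => rR; pose i := Ordinal rR.
  have <- : nth [::] R i = r by rewrite /= nth_index // -index_mem.
  apply: pe_trans (free_eq_pres _ (Ru i)) (pe_rel _).
  by apply: map_f; rewrite mem_enum.
move=> _ /mapP [i _ ->]; apply: pe_trans (pe_sym (free_eq_pres _ (Ru i))) _.
exact/pe_rel/mem_nth.
Qed.

Section ReidemeisterSchreier.
Variables (G : group) (fT : finGroupType) (rho : G -> fT).
Hypothesis rhoM : gmorphism rho.
Hypothesis rho_onto : forall z : fT, exists x, rho x = z.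
Variables (n s : nat) (f : 'I_n -> G) (u : 'I_s -> word n) (m : 'I_s -> nat).
Let R := [seq wpow (u i) (m i) | i <- enum 'I_s].
Hypothesis pres : presentation R f.

Local Open Scope group_scope.
Local Notation ev := (eval_word f).
Local Notation N := (gker rhoM).

Definition wimg (w : word n) := rho (ev w).
Definition limg (a : 'I_n * bool) := rho (eval_letter f a).

Lemma limgE i b : limg (i, b) = if b then (rho (f i))^-1 else rho (f i).
Proof. by rewrite /limg /eval_letter; case: b; rewrite ?gmorphV. Qed.
Lemma wimg_nil : wimg [::] = 1. Proof. exact: gmorph1. Qed.
Lemma wimg_cons a w : wimg (a :: w) = limg a * wimg w.
Proof. exact: rhoM. Qed.
Lemma wimg_cat v w : wimg (v ++ w) = wimg v * wimg w.
Proof. by rewrite /wimg eval_cat rhoM. Qed.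
Lemma wimg_winv w : wimg (winv w) = (wimg w)^-1.
Proof. by rewrite /wimg eval_winv gmorphV. Qed.
Lemma wimg_wpow w k : wimg (wpow w k) = wimg w ^+ k.
Proof.
by elim: k => [|k IHk]; rewrite ?wimg_nil // /wpow /= wimg_cat -/(wpow w k) IHk expgS.
Qed.

Lemma eval_rel r : r \in R -> ev r = gone G.
Proof. by move=> rR; apply/(proj2 pres r)/pe_rel. Qed.
Lemma wimg_pres_eq v w : pres_eq R v w -> wimg v = wimg w.
Proof. by move=> vw; rewrite /wimg (eval_pres_eq eval_rel vw). Qed.

Lemma wimg_onto z : exists w, wimg w = z.
Proof. by have [x <-] := rho_onto z; have [w <-] := proj1 pres x; exists w. Qed.

Definition tword (z : fT) : word n :=
  if z == 1 then [::] else projT1 (cid (wimg_onto z)).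
Lemma wimg_tword z : wimg (tword z) = z.
Proof. by rewrite /tword; case: eqP => [->|_]; [exact: wimg_nil | case: cid]. Qed.
Lemma tword1 : tword 1 = [::].
Proof. by rewrite /tword eqxx. Qed.

Definition trep z := ev (tword z).
Lemma trep1 : trep 1 = gone G. Proof. by rewrite /trep tword1. Qed.
Lemma rho_trep z : rho (trep z) = z. Proof. exact: wimg_tword. Qed.

Definition nschreier := #|{: fT * 'I_n}|.
Lemma nschreierE : nschreier = (#|fT| * n)%N.
Proof. by rewrite /nschreier card_prod card_ord. Qed.

Definition sgen (z : fT) (i : 'I_n) : 'I_nschreier := enum_rank (z, i).

Definition schreier_elt z i := trep z *g f i *g ginv (trep (z * rho (f i))).
Lemma schreier_elt_ker z i : rho (schreier_elt z i) = 1.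
Proof. by rewrite /schreier_elt !rhoM gmorphV // !rho_trep mulgV. Qed.

Definition schreier_gen (k : 'I_nschreier) : sub_group N :=
  exist _ (schreier_elt (enum_val k).1 (enum_val k).2) (schreier_elt_ker _ _).
Local Notation evN := (eval_word (fun k => proj1_sig (schreier_gen k))).

Lemma enum_val_sgen z i : enum_val (sgen z i) = (z, i).
Proof. exact: enum_rankK. Qed.

(* The Reidemeister rewriting process: a word read from the coset z becomes a
   word in the Schreier generators. *)
Definition rewrite_letter (z : fT) (a : 'I_n * bool) : 'I_nschreier * bool :=
  if a.2 then (sgen (z * (rho (f a.1))^-1) a.1, true) else (sgen z a.1, false).
Fixpoint rewrite_word (z : fT) (w : word n) : word nschreier :=
  if w is a :: w' then rewrite_letter z a :: rewrite_word (z * limg a) w' else [::].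

Lemma rewrite_word_cat z v w :
  rewrite_word z (v ++ w) = rewrite_word z v ++ rewrite_word (z * wimg v) w.
Proof.
elim: v z => [|a v IHv] z /=; first by rewrite wimg_nil mulg1.
by rewrite IHv wimg_cons mulgA.
Qed.

Lemma eval_rewrite_letter z a :
  eval_letter (fun k => proj1_sig (schreier_gen k)) (rewrite_letter z a) =
  trep z *g eval_letter f a *g ginv (trep (z * limg a)).
Proof.
case: a => i [];
  rewrite /rewrite_letter /eval_letter /= enum_val_sgen /schreier_elt limgE //=.
by rewrite !ginvM !ginvK mulgKV gmulA.
Qed.

Lemma eval_rewrite_word z w :
  evN (rewrite_word z w) = trep z *g ev w *g ginv (trep (z * wimg w)).
Proof.
elim: w z => [|a w IHw] z /=; first by rewrite wimg_nil mulg1 gmulg1 gmulgV.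
rewrite eval_rewrite_letter IHw wimg_cons mulgA !gmulA; congr (_ *g _).
by rewrite -!gmulA; do 2!congr (_ *g _); rewrite !gmulA gmulVg gmul1g.
Qed.

Lemma rewrite_letter_flip z a :
  rewrite_letter (z * limg a) (flip a) = flip (rewrite_letter z a).
Proof. by case: a => i []; rewrite limgE /rewrite_letter /flip //= mulgK. Qed.

Lemma rewrite_word_winv z w :
  rewrite_word (z * wimg w) (winv w) = winv (rewrite_word z w).
Proof.
elim: w z => [|a w IHw] z //=.
rewrite !winv_cons rewrite_word_cat wimg_cons mulgA IHw wimg_winv.
by rewrite mulgK /= rewrite_letter_flip.
Qed.

Definition coset_reps (g : fT) := [seq repr X | X <- enum (lcosets <[g]> [set: fT])].

(* All n |F| Schreier generators are kept; the |F| - 1 relators below, which kill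
   the rewritten transversal words, play the role of the generators that a Schreier
   transversal would delete, so the deficiency is the classical one. *)
Definition trans_rels := [seq rewrite_word 1 (tword z) | z <- enum fT & z != 1].
Definition conj_rels := flatten [seq [seq rewrite_word y (wpow (u i) (m i))
  | y <- coset_reps (wimg (u i))] | i <- enum 'I_s].
Definition schreier_rels := trans_rels ++ conj_rels.
Local Notation "v ~ w" := (pres_eq schreier_rels v w) (at level 70).

Lemma trans_rel z : rewrite_word 1 (tword z) ~ [::].
Proof.
have [->|z1] := eqVneq z 1; first by rewrite tword1; apply: pe_refl.
apply: pe_rel; rewrite mem_cat; apply/orP; left.
by apply: map_f; rewrite mem_filter z1 mem_enum.
Qed.

(* Each relator read from an arbitrary coset reduces to the one read from the
   chosen representative of its <[wimg (u i)]>-coset, since the relator maps to 1. *)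
Lemma conj_rel i z : rewrite_word z (wpow (u i) (m i)) ~ [::].
Proof.
set g := wimg (u i); set y := repr (z *: <[g]>).
have y_rel : rewrite_word y (wpow (u i) (m i)) ~ [::].
  apply: pe_rel; rewrite mem_cat; apply/orP; right; apply/flattenP.
  exists [seq rewrite_word y (wpow (u i) (m i)) | y <- coset_reps g].
    by apply: map_f; rewrite mem_enum.
  apply/map_f/map_f; rewrite mem_enum mem_lcosets.
  by rewrite -[z]mulg1 mem_mulg ?inE ?group1.
have [t ->] : exists t, z = y * g ^+ t.
  have /cycleP [t yz] : y^-1 * z \in <[g]>.
    by rewrite -groupV invMg invgK -mem_lcoset (mem_repr _ (lcoset_refl _ _)).
  by exists t; rewrite -yz mulKVg.
have rel1 : wimg (wpow (u i) (m i)) = 1.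
  by rewrite /wimg eval_rel ?gmorph1 //; apply: map_f; rewrite mem_enum.
apply: (@pe_catIl _ _ (rewrite_word y (wpow (u i) t))).
rewrite -wimg_wpow -rewrite_word_cat -wpowD addnC wpowD rewrite_word_cat rel1 mulg1.
by rewrite -[X in _ ~ X]cat0s; apply: pe_catr.
Qed.

Lemma rewrite_word_pres_eq v w :
  pres_eq R v w -> forall z, rewrite_word z v ~ rewrite_word z w.
Proof.
elim=> {v w} [w | v w _ vw | v w w' _ vw _ ww' | v v' w w' vv' IHv _ IHw | a
  | r /mapP [i _ ->]] z.
- exact: pe_refl.
- exact/pe_sym/vw.
- exact: pe_trans (vw z) (ww' z).
- by rewrite !rewrite_word_cat (wimg_pres_eq vv'); apply: pe_cat.
- by rewrite /= rewrite_letter_flip; apply: pe_cancel.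
- exact: conj_rel.
Qed.

(* Expanding generators into words of G inverts rewrite_word 1 modulo the Schreier
   relators; this is how relations of N are pulled back to relations of G. *)
Definition expand_gen (k : 'I_nschreier) : word n :=
  let: (z, i) := enum_val k in
  tword z ++ [:: (i, false)] ++ winv (tword (z * rho (f i))).
Definition expand_letter (a : 'I_nschreier * bool) : word n :=
  if a.2 then winv (expand_gen a.1) else expand_gen a.1.
Definition expand_word (w : word nschreier) : word n := flatten (map expand_letter w).

Lemma eval_expand_gen k : ev (expand_gen k) = proj1_sig (schreier_gen k).
Proof.
rewrite /expand_gen /=; case: (enum_val k) => z i /=.
by rewrite eval_cat /= eval_winv gmulA.
Qed.

Lemma eval_expand_word w : ev (expand_word w) = evN w.
Proof.
elim: w => [|[k b] w IHw] //=; rewrite eval_cat IHw /expand_letter /eval_letter /=.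
by case: b; rewrite ?eval_winv eval_expand_gen.
Qed.

Lemma wimg_expand_gen k : wimg (expand_gen k) = 1.
Proof. by rewrite /wimg eval_expand_gen; apply: (proj2_sig (schreier_gen k)). Qed.

Lemma wimg_expand_letter a : wimg (expand_letter a) = 1.
Proof. by case: a => k []; rewrite /expand_letter /= ?wimg_winv wimg_expand_gen ?invg1. Qed.

Lemma rewrite_expand_gen k : rewrite_word 1 (expand_gen k) ~ [:: (k, false)].
Proof.
have [[z i] ->] : exists p, k = enum_rank p by exists (enum_val k); rewrite enum_valK.
rewrite /expand_gen enum_rankK.
rewrite rewrite_word_cat wimg_tword mul1g rewrite_word_cat /= wimg_cons wimg_nil mulg1.
have -> : rewrite_letter z (i, false) = (enum_rank (z, i), false) by [].
rewrite limgE; have := rewrite_word_winv 1 (tword (z * rho (f i))).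
rewrite wimg_tword mul1g => ->.
rewrite -[X in _ ~ X]cats0 -[X in _ ~ X]cat0s; apply: pe_cat; first exact: trans_rel.
by rewrite -cat1s; apply/pe_catl/(pe_winv (v := [::]))/trans_rel.
Qed.

Lemma rewrite_expand_letter a : rewrite_word 1 (expand_letter a) ~ [:: a].
Proof.
case: a => k [] /=; last exact: rewrite_expand_gen.
rewrite /expand_letter /= -[X in rewrite_word X _](mulg1 1).
rewrite -[X in rewrite_word (1 * X) _](wimg_expand_gen k).
rewrite rewrite_word_winv; apply: (pe_winv (v := [:: (k, false)])).
exact: rewrite_expand_gen.
Qed.

Lemma rewrite_expand_word w : rewrite_word 1 (expand_word w) ~ w.
Proof.
elim: w => [|a w IHw] /=; first exact: pe_refl.
rewrite rewrite_word_cat wimg_expand_letter mulg1 -cat1s.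
exact/pe_cat/IHw/rewrite_expand_letter.
Qed.

Lemma eval_schreier_rel r : r \in schreier_rels -> evN r = gone G.
Proof.
rewrite mem_cat => /orP [/mapP [z _ ->] | /flattenP [_ /mapP [i iP ->] /mapP [y _ ->]]].
  by rewrite eval_rewrite_word wimg_tword mul1g trep1 gmul1g gmulgV.
rewrite eval_rewrite_word /wimg eval_rel ?gmorph1 ?mulg1 ?gmulg1 ?gmulgV //.
exact: map_f.
Qed.

Lemma schreier_presentation : presentation schreier_rels schreier_gen.
Proof.
split=> [x | w].
  have [w wx] := proj1 pres (proj1_sig x); exists (rewrite_word 1 w); apply: sub_eq.
  rewrite eval_sub_group eval_rewrite_word trep1 gmul1g.
  have -> : wimg w = 1 by rewrite /wimg wx; apply: (proj2_sig x).
  by rewrite mulg1 trep1 ginv1 gmulg1.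
split=> [w1 | w1].
  have /(proj2 pres) /rewrite_word_pres_eq /(_ 1) /= : ev (expand_word w) = gone G.
    by rewrite eval_expand_word -eval_sub_group w1.
  exact/pe_trans/pe_sym/rewrite_expand_word.
apply: sub_eq; rewrite eval_sub_group; apply: (eval_pres_eq _ w1) => r /eval_schreier_rel.
by rewrite -eval_sub_group.
Qed.

Lemma size_schreier_rels :
  size schreier_rels = (#|fT|.-1 + \sum_(i < s) #|[set: fT] : <[wimg (u i)]>|)%N.
Proof.
rewrite size_cat size_map size_filter -(cardC1 (1 : fT)) cardE -size_filter enumT.
congr (_ + _)%N; rewrite size_flatten /shape -map_comp sumnE big_map big_enum.
by apply: eq_bigr => i _; rewrite /= size_map size_map -cardE card_lcosets.
Qed.
End ReidemeisterSchreier.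

Section Estimates.
Variable Rl : realType.
Local Open Scope ring_scope.

Lemma recip_order_bound (G : group) (g : G) (q : Rl) (M : nat)
    (fT : finGroupType) (rho : G -> fT) :
  gmorphism rho -> (0 < M)%N -> recip_order g q ->
  (forall d, (0 < d < M)%N -> ~ fin_residual (gexp g d) -> rho (gexp g d) <> 1%g) ->
  (#[rho g]%g%:R)^-1 <= q + (M%:R)^-1.
Proof.
move=> rhoM M0 g_ord sep; set o := #[rho g]%g; have o0 : (0 < o)%N := order_gt0 _.
have q0 : 0 <= q by case: g_ord => [[k [_ _ _ ->]] | [_ ->]]; rewrite ?invr_ge0.
have [oM | Mo] := ltnP o M; last first.
  by rewrite -[_^-1]add0r lerD // lef_pV2 ?ler_nat // posrE ltr0n.
(* Below M, rho only kills residual powers of g, so o is the residual order of g. *)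
have res_o : fin_residual (gexp g o).
  apply: contra_notP (sep o _) _; first by rewrite o0.
  by apply; rewrite gmorphX // expg_order.
case: g_ord => [[k [k1 res_k min_k ->]] | [inf _]]; last by case: (inf o o0).
have ko : (k <= o)%N by rewrite leqNgt; apply/negP => /(min_k o o0).
have ok : (o %| k)%N by rewrite order_dvdn -gmorphX // gmorph_fin_residual.
have -> : o = k by apply/eqP; rewrite eqn_leq dvdn_leq.
by rewrite lerDl invr_ge0 ler0n.
Qed.

Lemma index_cycle_natr (fT : finGroupType) (g : fT) :
  (#|[set: fT] : <[g]>|%g%:R : Rl) = #|fT|%:R / #[g]%g%:R.
Proof.
have := Lagrange (finset.subsetT <[g]>%g); rewrite cardsT => <-.
by rewrite natrM -[#|<[g]>%G|]/#[g]%g mulrAC divff ?mul1r // pnatr_eq0 -lt0n order_gt0.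
Qed.

(* Reidemeister-Schreier count: #|fT| n generators and
   #|fT| - 1 + \sum_i #|fT| / #[rho (u i)] relators. *)
Lemma def_gker_ge (G : group) (fT : finGroupType) (rho : G -> fT) (rhoM : gmorphism rho)
    (rho_onto : forall z, exists x, rho x = z)
    n s (f : 'I_n -> G) (u : 'I_s -> word n) (m : 'I_s -> nat) :
  presentation [seq wpow (u i) (m i) | i <- enum 'I_s] f ->
  ((n%:R - 1 - \sum_(i < s) (#[rho (eval_word f (u i))]%g%:R)^-1)%:E <=
    (def Rl (sub_group (gker rhoM)) - 1) * ((#|fT|%:R)^-1)%:E)%E.
Proof.
move=> pres; set j := #|fT|; set S := \sum_(i < s) _.
have j_gt0 : (0 < j)%N by apply/card_gt0P; exists 1%g.
have j0 : (j%:R : Rl) != 0 by rewrite pnatr_eq0 -lt0n.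
pose v : Rl := (nschreier fT n)%:R - (size (schreier_rels rho_onto pres))%:R.
have def_ge : (v%:E <= def Rl (sub_group (gker rhoM)))%E.
  apply: ereal_sup_ubound; exists v => //; do 3 eexists; split => //.
  exact: schreier_presentation.
have v_eq : v = j%:R * (n%:R - 1 - S) + 1.
  rewrite /v size_schreier_rels nschreierE natrD natr_sum natrM -subn1 natrB //.
  under eq_bigr do rewrite index_cycle_natr.
  by rewrite -mulr_sumr /S /wimg; ring.
rewrite v_eq in def_ge.
have := lee_wpmul2r (x := ((j%:R)^-1)%:E) _ (leeB def_ge (lexx 1%E)).
rewrite lee_fin invr_ge0 ler0n => /(_ isT); apply: le_trans.
by rewrite -EFinB -EFinM lee_fin addrK mulrC mulKf.
Qed.

Lemma onto_quotient_large_orders (G : group) s (g : 'I_s -> G) (q : 'I_s -> Rl) (M : nat) :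
  (0 < M)%N -> (forall i, recip_order (g i) (q i)) ->
  exists (fT : finGroupType) (rho : G -> fT),
    [/\ gmorphism rho, forall z, exists x, rho x = z &
        forall i, (#[rho (g i)]%g%:R)^-1 <= q i + (M%:R)^-1].
Proof.
move=> M0 gq; pose x (p : 'I_s * 'I_M) := gexp (g p.1) p.2.
pose idx := [seq p <- enum {: 'I_s * 'I_M} | `[< ~ fin_residual (x p) >]].
have idx_nres p : p \in idx -> ~ fin_residual (x p).
  by rewrite mem_filter => /andP [/asboolP].
have [fT [rho [rhoM sep]]] := fin_residual_sep idx_nres.
exists (subg_of (gimage_group rhoM)), (corestr rhoM).
split=> [||i]; [exact: corestrM | exact: corestr_onto |].
apply: recip_order_bound (corestrM rhoM) M0 (gq i) _ => d /andP [d0 dM] res_d.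
move=> /(congr1 val); rewrite corestrE /=.
apply: (sep (i, Ordinal dM)); rewrite mem_filter mem_enum andbT.
exact/asboolP.
Qed.

Lemma rdef_pres_approx (G : group) n (R : seq (word n)) (f : 'I_n -> G) (x e : Rl) :
  presentation R f -> rdef_pres R f x -> 0 < e ->
  exists (H : subgroup G) (j : nat), index_is H j /\
    ((x - 1 - e)%:E <= (def Rl (sub_group H) - 1) * ((j%:R)^-1)%:E)%E.
Proof.
move=> pres [u [q [uP ->]]] e0; set s := size R.
have [m mP] := choice uP.
pose M := (Num.Def.truncn (s%:R / e)).+1.
have sM : s%:R / M%:R <= e.
  rewrite ler_pdivrMr ?ltr0n // mulrC -ler_pdivrMr //.
  exact/ltW/truncnS_gt.
have [fT [rho [rhoM rho_onto ord_ge]]] :=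
  @onto_quotient_large_orders G s (fun i => eval_word f (u i)) q M isT
    (fun i => let: And4 _ _ _ h := mP i in h).
have pres' := presentation_free_eq pres (fun i => let: And4 _ h _ _ := mP i in h).
exists (gker rhoM), #|fT|; split; first exact: index_gker.
apply: le_trans (def_gker_ge rhoM rho_onto pres'); rewrite lee_fin.
have : \sum_(i < s) (#[rho (eval_word f (u i))]%g%:R)^-1
         <= \sum_(i < s) q i + s%:R / M%:R.
  apply: le_trans (ler_sum _ (fun i _ => ord_ge i)) _.
  by rewrite big_split /= sumr_const card_ord mulr_natl.
lra.
Qed.

Lemma rdef_pres_le_DG (G : group) n (R : seq (word n)) (f : 'I_n -> G) (x : Rl) :
  presentation R f -> rdef_pres R f x -> ((x - 1)%:E <= DG Rl G)%E.
Proof.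
move=> pres xR; apply/lee_addgt0Pr => e e0.
have [H [j [Hj le_def]]] := rdef_pres_approx pres xR e0.
rewrite -leeBlDr // -EFinB; apply: le_trans le_def _.
by apply: ereal_sup_ubound; exists H, j.
Qed.
End Estimates.

Local Open Scope ereal_scope.

Theorem mainTheorem9 (Rl : realType) (G : group) :
  finitely_presented G ->
  (rdef Rl G - 1 <= DG Rl G) /\
  (1 < rdef Rl G ->
     exists (H : subgroup G), finite_index H /\ 1 < def Rl (sub_group H)).
Proof.
move=> _.
have rdef_le : rdef Rl G - 1 <= DG Rl G.
  rewrite leeBlDr //; apply: ge_ereal_sup => _ [x [n [R [f [pres xR]]]] <-].
  by rewrite -leeBlDr // -EFinB; apply: rdef_pres_le_DG pres xR.
split=> // rdef_gt1.
have : 0 < DG Rl G by apply: lt_le_trans rdef_le; rewrite sube_gt0.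
case/ereal_sup_gt => _ [H [j [Hj ->]]].
have j0 : (0 < j)%N by case: j Hj => // -[r rP]; have [[] []] := rP (gone G).
rewrite pmule_lgt0 ?lte_fin ?invr_gt0 ?ltr0n // sube_gt0 => def_gt1.
by exists H; split; first exists j.
Qed.
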